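(* Let $\lambda\in[-1,1)$. Every continuous $\lambda$-curve $\gamma:I\to\mathbb{R}^d$ has the $\lambda$-cone property.
   Context: $\mathbb{R}^d$ carries the Euclidean inner product $\langle\cdot,\cdot\rangle$ and norm $\|\cdot\|$; $I\subset\mathbb{R}$ is an interval; $\mathbb{S}^{d-1}$ is the unit sphere. $\gamma$ is a $\lambda$-curve if for all $t_1\le t_2\le t_3$ in $I$: $\|\gamma(t_1)-\gamma(t_2)\|\le\|\gamma(t_1)-\gamma(t_3)\|+\lambda\|\gamma(t_2)-\gamma(t_3)\|$. For $t\in I$, the set of forward secants is $\mathrm{sec}^+(t)=\{q\in\mathbb{S}^{d-1}: q=\lim_k \frac{\gamma(t_k)-\gamma(t)}{\|\gamma(t_k)-\gamma(t)\|}$ for some sequence $t_k\to t$ with $t_k>t\}$. A continuous curve $\gamma$ has the $\lambda$-cone property if for every $t\in I$, every $q\in\mathrm{sec}^+(t)$ and every $u\in I$ with $u<t$: $\big\langle q,\frac{\gamma(u)-\gamma(t)}{\|\gamma(u)-\gamma(t)\|}\big\rangle\le\lambda$. *)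

From HB Require Import structures.
From mathcomp Require Import all_boot all_order all_algebra.
From mathcomp Require Import all_classical all_reals all_analysis.
Set Implicit Arguments. Unset Strict Implicit. Unset Printing Implicit Defensive.
Import Order.TTheory GRing.Theory Num.Theory.
Import numFieldNormedType.Exports.
Local Open Scope classical_set_scope.
Local Open Scope ring_scope.

Definition dotv {R : realType} {d : nat} (u v : 'rV[R]_d) : R :=
  \sum_(i < d) u 0 i * v 0 i.

Definition enorm {R : realType} {d : nat} (u : 'rV[R]_d) : R :=
  Num.sqrt (dotv u u).

Definition lambda_curve {R : realType} {d : nat} (I : set R) (lam : R)
  (gamma : R -> 'rV[R]_d) : Prop :=
  forall t1 t2 t3, I t1 -> I t2 -> I t3 -> t1 <= t2 -> t2 <= t3 ->
    enorm (gamma t1 - gamma t2)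
      <= enorm (gamma t1 - gamma t3) + lam * enorm (gamma t2 - gamma t3).

Definition forward_secant {R : realType} {d : nat} (I : set R)
  (gamma : R -> 'rV[R]_d) (t : R) (q : 'rV[R]_d) : Prop :=
  enorm q = 1 /\
  exists tk : nat -> R,
    (forall k, I (tk k)) /\ (forall k, t < tk k) /\
    (forall k, gamma (tk k) != gamma t) /\
    tk @ \oo --> t /\
    (fun k => (enorm (gamma (tk k) - gamma t))^-1 *: (gamma (tk k) - gamma t))
      @ \oo --> q.

(* lambda-cone property (for a continuous curve; continuity is a separate
   hypothesis). The normalized vector is only defined when gamma u <> gamma t. *)
Definition lambda_cone_property {R : realType} {d : nat} (I : set R) (lam : R)
  (gamma : R -> 'rV[R]_d) : Prop :=
  forall t, I t -> forall q, forward_secant I gamma t q ->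
  forall u, I u -> u < t -> gamma u != gamma t ->
    dotv q ((enorm (gamma u - gamma t))^-1 *: (gamma u - gamma t)) <= lam.

(** A forward secant [q] at [t] is a limit of unit secants [h_k / |h_k|] with
    [h_k = gamma(t_k) - gamma(t)] and [t_k] decreasing to [t].  For [u < t] put
    [a = gamma(u) - gamma(t)].  The lambda-curve inequality for [u <= t <= t_k]
    reads [|a| <= |a - h_k| + lam |h_k|]; squaring it turns it into a bound on
    the cosine of the angle between [h_k] and [a], namely
    [<h_k/|h_k|, a/|a|> <= lam + |h_k| (1 - lam^2) / (2 |a|)].  By continuity
    [|h_k| -> 0], and the bound passes to the limit. *)
From HB Require Import structures.
From mathcomp Require Import all_boot all_order all_algebra.
From mathcomp Require Import all_classical all_reals all_analysis.
From mathcomp Require Import ring lra.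
Import Order.TTheory GRing.Theory Num.Theory.
Import numFieldNormedType.Exports.
Local Open Scope classical_set_scope.
Local Open Scope ring_scope.

Local Notation normalize u := ((enorm u)^-1 *: u).

Section EuclideanNorm.
Context {R : realType} {d : nat}.
Implicit Types u v w : 'rV[R]_d.

Lemma dotvC u v : dotv u v = dotv v u.
Proof. by apply: eq_bigr => i _; rewrite mulrC. Qed.

Lemma dotvBl u v w : dotv (u - v) w = dotv u w - dotv v w.
Proof. by rewrite /dotv -sumrB; apply: eq_bigr => i _; rewrite !mxE mulrBl. Qed.

Lemma dotvBr u v w : dotv w (u - v) = dotv w u - dotv w v.
Proof. by rewrite dotvC dotvBl !(dotvC w). Qed.

Lemma dotvZl c u v : dotv (c *: u) v = c * dotv u v.
Proof. by rewrite /dotv mulr_sumr; apply: eq_bigr => i _; rewrite !mxE mulrA. Qed.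

Lemma dotvZr c u v : dotv v (c *: u) = c * dotv v u.
Proof. by rewrite dotvC dotvZl dotvC. Qed.

Lemma dotvv_ge0 u : 0 <= dotv u u.
Proof. by apply: sumr_ge0 => i _; rewrite -expr2 sqr_ge0. Qed.

Lemma dotvv_eq0 u : (dotv u u == 0) = (u == 0).
Proof.
apply/idP/eqP => [/eqP uu0|->]; last by rewrite /dotv big1 // => i _; rewrite mxE mul0r.
apply/matrixP => i j; rewrite ord1 mxE; apply/eqP; rewrite -sqrf_eq0 expr2.
by apply/eqP; apply: (psumr_eq0P _ uu0) => // k _; rewrite -expr2 sqr_ge0.
Qed.

Lemma enorm_ge0 u : 0 <= enorm u.
Proof. exact: sqrtr_ge0. Qed.

Lemma enorm_gt0 u : (0 < enorm u) = (u != 0).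
Proof. by rewrite sqrtr_gt0 lt_def dotvv_ge0 dotvv_eq0 andbT. Qed.

Lemma enorm0 : enorm (0 : 'rV[R]_d) = 0.
Proof. by apply/eqP; rewrite eq_le enorm_ge0 andbT leNgt enorm_gt0 eqxx. Qed.

Lemma enormN u : enorm (- u) = enorm u.
Proof.
by rewrite /enorm /dotv; congr Num.sqrt; apply: eq_bigr => i _; rewrite !mxE mulrNN.
Qed.

Lemma enorm_sqr u : enorm u ^+ 2 = dotv u u.
Proof. by rewrite /enorm sqr_sqrtr // dotvv_ge0. Qed.

Lemma enormB_sqr u v :
  enorm (u - v) ^+ 2 = enorm u ^+ 2 - 2 * dotv u v + enorm v ^+ 2.
Proof. by rewrite !enorm_sqr dotvBl !dotvBr (dotvC v u); ring. Qed.

Lemma dotv_cvg {T} (F : set_system T) {FF : Filter F} (f g : T -> 'rV[R]_d) v w :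
  f @ F --> v -> g @ F --> w -> dotv (f x) (g x) @[x --> F] --> dotv v w.
Proof.
move=> fv gw; apply: (@cvg_big _ _ +%R 0 xpredT) => //.
  by move=> [x y]; apply: add_continuous.
have coord_cvg (h : T -> 'rV[R]_d) (z : 'rV[R]_d) j :
    h @ F --> z -> h x 0 j @[x --> F] --> z 0 j.
  move=> hz; apply: (@continuous_cvg _ _ _ _ _ h (fun M : 'rV[R]_d => M 0 j)) => //.
  exact: coord_continuous.
by move=> i _; apply: cvgM; apply: coord_cvg.
Qed.

Lemma enorm_cvg {T} (F : set_system T) {FF : Filter F} (f : T -> 'rV[R]_d) v :
  f @ F --> v -> enorm (f x) @[x --> F] --> enorm v.
Proof.
move=> fv; apply: (@continuous_cvg _ _ _ _ _ (fun x => dotv (f x) (f x)) Num.sqrt).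
  exact: sqrt_continuous.
exact: dotv_cvg.
Qed.

Lemma dotv_normalize_le (lam : R) (a h : 'rV[R]_d) : a != 0 -> h != 0 ->
  lam * enorm h <= enorm a -> enorm a <= enorm (a - h) + lam * enorm h ->
  dotv (normalize h) (normalize a) <= lam + enorm h * ((1 - lam ^+ 2) / (2 * enorm a)).
Proof.
rewrite -!enorm_gt0 dotvZl dotvZr (dotvC h a).
have := enormB_sqr a h; have := enorm_ge0 (a - h).
set A := enorm a; set E := enorm h; set N := enorm (a - h); set X := dotv a h.
move=> N_ge0 N_sqr A_gt0 E_gt0 lamE_le triangle.
have sqr_le : (A - lam * E) ^+ 2 <= N ^+ 2 by nra.
have -> : E^-1 * (A^-1 * X) = X / (E * A) by rewrite mulrA -invfM mulrC.
rewrite ler_pdivrMr ?mulr_gt0 //.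
have -> : (lam + E * ((1 - lam ^+ 2) / (2 * A))) * (E * A)
          = lam * E * A + E ^+ 2 * (1 - lam ^+ 2) / 2.
  by field; rewrite gt_eqF.
lra.
Qed.

End EuclideanNorm.

Lemma cvg_within_continuous_comp {S} {T U : topologicalType} {F : set_system S}
    {FF : Filter F} {D : set T} {f : T -> U} {g : S -> T} {t : T} :
  {within D, continuous f} -> D t -> (forall s, D (g s)) -> g @ F --> t ->
  f (g s) @[s --> F] --> f t.
Proof.
move=> f_cont Dt Dg gt.
have g_within : g @ F --> within D (nbhs t).
  move=> P /= DP; change (\forall s \near F, P (g s)); near=> s.
  suff : D (g s) -> P (g s) by apply; exact: Dg.
  by near: s; exact: gt _ DP.
exact: cvg_trans (cvg_app f g_within) ((subspace_continuousP D f).1 f_cont t Dt).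
Unshelve. all: by end_near.
Qed.

Theorem proposition2p6 (R : realType) (d : nat) (I : set R) (lam : R)
  (gamma : R -> 'rV[R]_d) :
  is_interval I ->
  -1 <= lam -> lam < 1 ->
  {within I, continuous gamma} ->
  lambda_curve I lam gamma ->
  lambda_cone_property I lam gamma.
Proof.
move=> _ _ lam_lt1 gamma_cont lc t It q [_ [tk [Itk [t_lt_tk [tk_neq [tk_t secq]]]]]].
move=> u Iu u_lt_t gu_neq.
set a := gamma u - gamma t; set h := fun k => gamma (tk k) - gamma t.
set C := (1 - lam ^+ 2) / (2 * enorm a).
have a_neq0 : a != 0 by rewrite subr_eq0 gu_neq.
have h_to0 : h @ \oo --> (0 : 'rV[R]_d).
  rewrite -(subrr (gamma t)); apply: cvgB; last exact: cvg_cst.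
  exact: cvg_within_continuous_comp gamma_cont It Itk tk_t.
have normh_to0 : enorm (h k) @[k --> \oo] --> 0.
  by rewrite -(@enorm0 R d); exact: enorm_cvg.
have secant_to : dotv (normalize (h k)) (normalize a) - enorm (h k) * C @[k --> \oo]
                  --> dotv q (normalize a).
  rewrite -[X in _ --> X]subr0 -(mul0r C); apply: cvgB.
    exact: dotv_cvg secq (cvg_cst _).
  by apply: cvgM => //; exact: cvg_cst.
apply: (cvgr_to_le secant_to); near=> k; rewrite lerBlDr.
apply: dotv_normalize_le => //; first by rewrite subr_eq0 tk_neq.
  rewrite (le_trans (ler_piMl (enorm_ge0 _) (ltW lam_lt1))) // ltW //.
  by near: k; apply: cvgr_lt normh_to0 _ _; rewrite enorm_gt0.
have := lc u t (tk k) Iu It (Itk k) (ltW u_lt_t) (ltW (t_lt_tk k)).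
have -> : gamma u - gamma (tk k) = a - h k by rewrite /a /h opprB addrA subrK.
by rewrite -[gamma t - _]opprB enormN.
Unshelve. all: by end_near.
Qed.
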